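(* The urn process is reversible in time: $(U_0,U_1,\dots,U_n)$ and $(U_n,U_{n-1},\dots,U_0)$ are equal in distribution.
   Context: Urn process: let $n\ge2$. An urn initially contains $n$ black balls. It is emptied in $n$ steps: in each of the first $n-1$ steps a uniformly random pair of balls is removed from the urn and replaced by one red ball; in step $n$ the last remaining ball is removed. $U_k$ is the number of red balls in the urn after $k$ steps, $0\le k\le n$. Equivalently, $(U_k)$ is the Markov chain with $U_0=0$ and $\mathbf P(U_{k+1}=u-1\mid U_k=u)=\binom u2/\binom{n-k}2$, $\mathbf P(U_{k+1}=u\mid U_k=u)=u(n-k-u)/\binom{n-k}2$, $\mathbf P(U_{k+1}=u+1\mid U_k=u)=\binom{n-k-u}2/\binom{n-k}2$ (for $k\le n-2$), and $U_n=0$. *)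

From HB Require Import structures.
From mathcomp Require Import all_boot all_order all_algebra.
Set Implicit Arguments. Unset Strict Implicit. Unset Printing Implicit Defensive.
Import Order.TTheory GRing.Theory Num.Theory.
Local Open Scope ring_scope.

(* One-step transition probability of the urn chain with n initial balls:
   probability that U_{k+1} = v given U_k = u (step k+1). *)
Definition urn_trans (n k u v : nat) : rat :=
  if (k.+2 <= n)%N then
    let d := ('C(n - k, 2))%:R in
    if v.+1 == u then ('C(u, 2))%:R / d
    else if v == u then (u * (n - k - u))%:R / d
    else if v == u.+1 then ('C(n - k - u, 2))%:R / d
    else 0
  else (* last step k = n-1: the last ball is removed, U_n = 0 *)
    (v == 0%N)%:R.

(* Probability that (U_0, ..., U_n) = (s_0, ..., s_n), for s of size n+1
   (U_0 = 0 deterministically). *)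
Definition urn_path_prob (n : nat) (s : seq nat) : rat :=
  (nth 0%N s 0 == 0%N)%:R *
  \prod_(k < n) urn_trans n k (nth 0%N s k) (nth 0%N s k.+1).

(* Between steps k and k+1 the chain satisfies a time-reversed detailed balance:
   pi_k(u) P_k(u, v) = pi_{k+1}(v) P_{n-1-k}(v, u), where pi_k is the
   hypergeometric law of U_k.  Multiplying these relations along a path, the
   weights telescope, and pi_0 = pi_n is the point mass at 0; hence a path and
   its reversal have the same probability.  For 0 < k < n-1 the relation is a
   binomial identity that is symmetric in (n - k, u) and (k + 1, v). *)

From mathcomp Require Import all_boot all_order all_algebra.
From mathcomp Require Import zify ring.

Set Implicit Arguments.
Unset Strict Implicit.
Unset Printing Implicit Defensive.

Import GRing.Theory Num.Theory.

Definition urn_kernel (a u v : nat) : nat :=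
  if v.+1 == u then 'C(u, 2) else if v == u then u * (a - u)
  else if v == u.+1 then 'C(a - u, 2) else 0.

Lemma urn_kernel_down a v : urn_kernel a v.+1 v = 'C(v.+1, 2).
Proof. by rewrite /urn_kernel eqxx. Qed.

Lemma urn_kernel_stay a u : urn_kernel a u u = u * (a - u).
Proof. by rewrite /urn_kernel eqxx ifN //; lia. Qed.

Lemma urn_kernel_up a u : urn_kernel a u u.+1 = 'C(a - u, 2).
Proof. by rewrite /urn_kernel eqxx !ifN //; lia. Qed.

Lemma urn_kernel_far a u v :
  v.+1 != u -> v != u -> v != u.+1 -> urn_kernel a u v = 0.
Proof. by move=> *; rewrite /urn_kernel !ifN. Qed.

Lemma mul2_bin2 m : 2 * 'C(m, 2) = m * m.-1.
Proof. by rewrite mul_bin_left bin1 subn1 mulnC. Qed.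

(* Up to a factor depending only on k, urn_flow (n - k) k.+1 u v is pi_k(u) P_k(u, v). *)
Definition urn_flow (a b u v : nat) : nat :=
  u * 'C(a, u) * 'C(b.-1, u) * urn_kernel a u v * b.

Lemma urn_flow_stay a b u : urn_flow a b u u = urn_flow b a u u.
Proof.
rewrite /urn_flow !urn_kernel_stay.
transitivity (u * u * ((a - u) * 'C(a, u)) * (b * 'C(b.-1, u))); first ring.
by rewrite -(mul_bin_down a u) (mul_bin_down b u); ring.
Qed.

Lemma urn_flow_up a b u : urn_flow a b u u.+1 = urn_flow b a u.+1 u.
Proof.
rewrite /urn_flow urn_kernel_up urn_kernel_down.
apply/eqP; rewrite -(eqn_pmul2l (_ : 0 < 2)) //; apply/eqP.
transitivity (u * 'C(a, u) * (b * 'C(b.-1, u)) * (2 * 'C(a - u, 2))); first ring.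
transitivity ('C(b, u.+1) * (u.+1 * 'C(a.-1, u.+1)) * (2 * 'C(u.+1, 2)) * a);
  last ring.
rewrite (mul_bin_diag b u) (mul_bin_left a.-1 u) !mul2_bin2 /=.
transitivity (u.+1 * 'C(b, u.+1) * u * (a - u).-1 * ((a - u) * 'C(a, u)));
  first ring.
rewrite -(mul_bin_down a u) (_ : (a - u).-1 = a.-1 - u); last lia.
ring.
Qed.

Lemma urn_flow_sym a b u v : urn_flow a b u v = urn_flow b a v u.
Proof.
have [->|ne_up] := eqVneq v u.+1; first exact: urn_flow_up.
have [<-|ne_down] := eqVneq v.+1 u; first exact/esym/urn_flow_up.
have [->|ne_stay] := eqVneq v u; first exact: urn_flow_stay.
rewrite /urn_flow !urn_kernel_far ?muln0 ?mul0n //; lia.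
Qed.

Lemma urn_denominator_balance n k :
  k.+1 * 'C(n.-1, k.+1) * 'C(k.+1, 2) * (n - k)
  = k * 'C(n.-1, k) * 'C(n - k, 2) * k.+1.
Proof.
apply/eqP; rewrite -(eqn_pmul2l (_ : 0 < 2)) //; apply/eqP.
transitivity ((k.+1 * 'C(n.-1, k.+1)) * (2 * 'C(k.+1, 2)) * (n - k)); first ring.
transitivity (k * 'C(n.-1, k) * (2 * 'C(n - k, 2)) * k.+1); last ring.
rewrite mul_bin_left !mul2_bin2 /= (_ : (n - k).-1 = n.-1 - k); last lia.
ring.
Qed.

Local Open Scope ring_scope.

Lemma urn_trans_kernel n k u v : (k.+2 <= n)%N ->
  urn_trans n k u v = (urn_kernel (n - k) u v)%:R / ('C(n - k, 2))%:R.
Proof.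
by move=> hk; rewrite /urn_trans /urn_kernel hk; repeat case: eqP => // _;
  rewrite mul0r.
Qed.

Lemma urn_trans_first n v : (1 < n)%N -> urn_trans n 0 0 v = (v == 1)%:R.
Proof.
move=> hn; rewrite urn_trans_kernel //.
case: v => [|[|v]]; rewrite /urn_kernel /= ?subn0 ?mul0r //.
by rewrite divff // pnatr_eq0 -lt0n bin_gt0.
Qed.

Lemma urn_trans_last n u v : (0 < n)%N -> urn_trans n n.-1 u v = (v == 0)%:R.
Proof. by case: n => // n _; rewrite /urn_trans /= ltnn. Qed.

(* For 0 < k < n this is P(U_k = u) = 'C(n-k, u) 'C(k-1, u-1) / 'C(n-1, k). *)
Definition urn_law (n k u : nat) : rat :=
  if (0 < k < n)%N then (u * 'C(n - k, u) * 'C(k, u))%:R / (k * 'C(n.-1, k))%:R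
  else (u == 0)%:R.

Lemma urn_law_first n v : (1 < n)%N -> urn_law n 1 v = (v == 1)%:R.
Proof.
move=> hn; rewrite /urn_law hn /= subn1 mul1n.
case: v => [|[|v]]; first by rewrite !mul0n mul0r.
  by rewrite mul1n bin1 binn muln1 divff // pnatr_eq0; lia.
by rewrite (@bin_small 1) // muln0 mul0r.
Qed.

Lemma urn_law_last n u : (1 < n)%N -> urn_law n n.-1 u = (u == 1)%:R.
Proof.
move=> hn; rewrite /urn_law (_ : (0 < n.-1 < n)%N); last lia.
rewrite (_ : (n - n.-1 = 1)%N) ?binn ?muln1; last lia.
case: u => [|[|u]]; first by rewrite !mul0n mul0r.
  by rewrite binn !mul1n bin1 divff // pnatr_eq0; lia.
by rewrite (@bin_small 1) // muln0 mul0n mul0r.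
Qed.

Lemma urn_law_balance_inner n k u v : (0 < k)%N -> (k.+2 <= n)%N ->
  urn_law n k u * urn_trans n k u v
  = urn_law n k.+1 v * urn_trans n (n - k.+1) v u.
Proof.
move=> k_gt0 hkn; rewrite /urn_law k_gt0 (ltnW hkn) hkn /=.
rewrite !urn_trans_kernel //; last lia.
rewrite (_ : (n - (n - k.+1) = k.+1)%N); last lia.
rewrite !mulf_div -!natrM; apply/eqP.
rewrite eqr_div ?pnatr_eq0 ?muln_eq0 ?negb_or -?lt0n ?bin_gt0; [|lia..].
rewrite -!natrM eqr_nat -(eqn_pmul2l (_ : 0 < k.+1 * (n - k))%N); last nia.
apply/eqP.
have flow := urn_flow_sym (n - k) k.+1 u v.
rewrite /urn_flow /= -subnS in flow.
transitivity ((u * 'C(n - k, u) * 'C(k, u) * urn_kernel (n - k) u v * k.+1)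
  * (k.+1 * 'C(n.-1, k.+1) * 'C(k.+1, 2) * (n - k)))%N; first ring.
rewrite flow urn_denominator_balance; ring.
Qed.

Lemma urn_law_balance n k u v : (1 < n)%N -> (k < n)%N ->
  urn_law n k u * urn_trans n k u v
  = urn_law n k.+1 v * urn_trans n (n - k.+1) v u.
Proof.
move=> hn hk.
have [-> | k_gt0] := posnP k.
  rewrite urn_law_first // subn1 urn_trans_last; last lia.
  rewrite /urn_law /=; have [->|] := eqVneq u 0%N; last by rewrite !mul0r mulr0.
  by rewrite urn_trans_first // mul1r mulr1.
have [k_last | k_inner] := eqVneq k n.-1; last first.
  by apply: urn_law_balance_inner => //; lia.
rewrite k_last (prednK (ltnW hn)) subnn urn_law_last // urn_trans_last; last lia.
rewrite /urn_law ltnn andbF; have [->|] := eqVneq v 0%N; last by rewrite !mul0r mulr0.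
by rewrite urn_trans_first // mulr1 mul1r.
Qed.

Lemma prod_balance (R : comPzSemiRingType) (g a b : nat -> R) N :
  (forall k, (k < N)%N -> g k * a k = g k.+1 * b k) ->
  g 0%N * \prod_(k < N) a k = g N * \prod_(k < N) b k.
Proof.
elim: N => [|N IH] balance; first by rewrite !big_ord0.
rewrite !big_ord_recr /= mulrA IH => [|k /ltnW]; last exact: balance.
by rewrite mulrAC balance // mulrAC -mulrA.
Qed.

Lemma urn_path_prob_rev n s : size s = n.+1 ->
  urn_path_prob n (rev s)
  = (nth 0%N s n == 0%N)%:R
    * \prod_(k < n) urn_trans n (n - k.+1) (nth 0%N s k.+1) (nth 0%N s k).
Proof.
move=> hs; rewrite /urn_path_prob nth_rev hs // subSS subn0.
congr (_ * _); rewrite (reindex_inj rev_ord_inj); apply: eq_bigr => k _ /=.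
have lt_kn := ltn_ord k; rewrite !nth_rev hs; [|lia..].
by congr (urn_trans _ _ (nth _ _ _) (nth _ _ _)); lia.
Qed.

Theorem theorem7 (n : nat) (hn : (2 <= n)%N) (s : seq nat) (hs : size s = n.+1) :
  urn_path_prob n s = urn_path_prob n (rev s).
Proof.
have law_start u : urn_law n 0 u = (u == 0%N)%:R by [].
have law_end u : urn_law n n u = (u == 0%N)%:R by rewrite /urn_law ltnn andbF.
rewrite urn_path_prob_rev // /urn_path_prob -law_start -law_end.
apply: (@prod_balance _ (fun k => urn_law n k (nth 0%N s k))
  (fun k => urn_trans n k (nth 0%N s k) (nth 0%N s k.+1))
  (fun k => urn_trans n (n - k.+1) (nth 0%N s k.+1) (nth 0%N s k)) n) => k lt_kn.
exact: urn_law_balance.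
Qed.
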